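(* Let $G=\mathbb{R}^6$ with coordinates $(y_1,y_2,z_1,z_2,v_1,v_2)$ and multiplication $(y',z',v')\cdot(y,z,v)=\big(y_1+y_1',y_2+y_2',z_1+z_1',z_2+z_2',\ v_1+v_1'+(y_1'-y_2')z_1-(y_1'+2y_2')z_2,\ v_2+v_2'-(2y_1'+y_2')z_1+(y_2'-y_1')z_2\big)$, and let $\Gamma=\{(y_1,y_2,z_1,z_2,v_1,v_2)\in\mathbb{Z}^6: v_1\equiv v_2\pmod 3\}$ and $N=\Gamma\backslash G$. Let $H_{\mathbb{C}}$ be the complex Heisenberg group of complex matrices $\begin{pmatrix}1&u_2&u_3\\0&1&u_1\\0&0&1\end{pmatrix}$, let $\Lambda=\mathbb{Z}\langle1,\zeta\rangle\subset\mathbb{C}$ with $\zeta=e^{2\pi i/3}$, and let $\Gamma_H\subset H_{\mathbb{C}}$ be the subgroup of matrices with $u_1,u_2,u_3\in\Lambda$. Then there is an isomorphism of Lie groups $G\to H_{\mathbb{C}}$ carrying $\Gamma$ onto $\Gamma_H$; in particular $N$ is diffeomorphic to $\Gamma_H\backslash H_{\mathbb{C}}$.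
   Context: $\Gamma$ is a discrete subgroup of $G$ and the quotient is by left multiplication. *)

From mathcomp Require Import all_boot all_order all_algebra.
From mathcomp Require Import all_classical all_reals all_analysis.
From mathcomp Require Import complex.
Import GRing.Theory Num.Theory ComplexField numFieldNormedType.Exports.
Local Open Scope ring_scope.

Section Defs.
Variable R : realType.

Fixpoint Ck (k : nat) (f : 'rV[R]_6 -> R) : Prop :=
  match k with
  | 0 => continuous f
  | k'.+1 => continuous f /\
      forall i : 'I_6, (forall x, derivable f x (delta_mx 0 i)) /\
                       Ck k' (fun x => 'D_(delta_mx 0 i) f x)
  end.

Definition smooth_fun (f : 'rV[R]_6 -> R) : Prop :=
  forall k, Ck k f.

Definition smooth_map (f : 'rV[R]_6 -> 'rV[R]_6) : Prop :=
  forall j : 'I_6, smooth_fun (fun x => f x 0 j).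

Definition Gmk (y1 y2 z1 z2 v1 v2 : R) : 'rV[R]_6 :=
  \row_(k < 6) [:: y1; y2; z1; z2; v1; v2]`_k.

Definition G_mul (g' g : 'rV[R]_6) : 'rV[R]_6 :=
  let y1' := g' 0 0 in let y2' := g' 0 1 in let z1' := g' 0 2 in
  let z2' := g' 0 3 in let v1' := g' 0 4 in let v2' := g' 0 5 in
  let y1 := g 0 0 in let y2 := g 0 1 in let z1 := g 0 2 in
  let z2 := g 0 3 in let v1 := g 0 4 in let v2 := g 0 5 in
  Gmk (y1 + y1') (y2 + y2') (z1 + z1') (z2 + z2')
      (v1 + v1' + (y1' - y2') * z1 - (y1' + 2 * y2') * z2)
      (v2 + v2' - (2 * y1' + y2') * z1 + (y2' - y1') * z2).

Definition Gamma : set 'rV[R]_6 :=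
  [set g | exists n : int ^ 6,
      (forall k : 'I_6, g 0 k = (n k)%:~R) /\ (3 %| n (inord 4) - n (inord 5))%Z].

Definition HC : set 'M[R[i]]_3 :=
  [set M | forall i j : 'I_3,
      ((i == j) -> M i j = 1) /\ ((j < i)%N -> M i j = 0)].

Definition Hu1 (M : 'M[R[i]]_3) := M 1 2.
Definition Hu2 (M : 'M[R[i]]_3) := M 0 1.
Definition Hu3 (M : 'M[R[i]]_3) := M 0 2.

Definition Hcoord (M : 'M[R[i]]_3) : 'rV[R]_6 :=
  Gmk (complex.Re (Hu1 M)) (complex.Im (Hu1 M)) (complex.Re (Hu2 M)) (complex.Im (Hu2 M))
      (complex.Re (Hu3 M)) (complex.Im (Hu3 M)).

Definition Hmat (w : 'rV[R]_6) : 'M[R[i]]_3 :=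
  let u1 := Complex (w 0 0) (w 0 1) in
  let u2 := Complex (w 0 2) (w 0 3) in
  let u3 := Complex (w 0 4) (w 0 5) in
  \matrix_(i < 3, j < 3)
    nth 0 (nth [::] [:: [:: 1; u2; u3]; [:: 0; 1; u1]; [:: 0; 0; 1]] i) j.

(* zeta = exp(2 pi i/3) = -1/2 + i sqrt(3)/2 and Lambda = Z<1, zeta> *)
Definition zeta : R[i] := Complex (- (1 / 2)) (Num.sqrt 3 / 2).

Definition Lambda : set R[i] :=
  [set u | exists a b : int, u = a%:~R + b%:~R * zeta].

Definition GammaH : set 'M[R[i]]_3 :=
  [set M | HC M /\ Lambda (Hu1 M) /\ Lambda (Hu2 M) /\ Lambda (Hu3 M)].

End Defs.

Arguments Ck {R}.
Arguments smooth_fun {R}.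
Arguments smooth_map {R}.
Arguments Gmk {R}.
Arguments G_mul {R}.
Arguments Gamma {R}.
Arguments HC {R}.
Arguments Hu1 {R}.
Arguments Hu2 {R}.
Arguments Hu3 {R}.
Arguments Hcoord {R}.
Arguments Hmat {R}.
Arguments zeta {R}.
Arguments Lambda {R}.
Arguments GammaH {R}.

From mathcomp Require Import all_boot all_order all_algebra.
From mathcomp Require Import all_classical all_reals all_analysis.
From mathcomp Require Import complex.
From mathcomp Require Import ring lra.
Import Order.TTheory GRing.Theory Num.Theory ComplexField numFieldNormedType.Exports.
Local Open Scope ring_scope.

(* Writing u = p + q zeta with real p, q identifies C with R^2 so that Lambda
   becomes Z^2.  In these coordinates the map
     u1 = -(z1 + z2) - z2 zeta,  u2 = (y1 + y2) + y2 zeta,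
     u3 = (v1 + 2 v2)/3 + (2 v1 + v2)/3 zeta
   is a real-linear bijection R^6 -> C^3.  Since zeta^2 = -1 - zeta, the
   Heisenberg cocycle u2' u1 expands to exactly the correction terms of the
   product of G, so the map is a group isomorphism onto H_C.  It carries the
   integer points with v1 = v2 mod 3 onto Lambda^3 because
   (v1, v2) |-> ((v1 + 2 v2)/3, (2 v1 + v2)/3) maps that index-3 sublattice
   of Z^2 onto Z^2.  Both the map and its inverse are affine in coordinates,
   hence smooth. *)

Lemma ord3_cases (P : 'I_3 -> Prop) : P 0 -> P 1 -> P 2 -> forall k, P k.
Proof.
move=> p0 p1 p2 [[|[|[|k]]] hk] //.
- by rewrite (_ : Ordinal hk = 0) //; apply: val_inj.
- by rewrite (_ : Ordinal hk = 1) //; apply: val_inj.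
- by rewrite (_ : Ordinal hk = 2) //; apply: val_inj.
Qed.

Lemma ord6_cases (P : 'I_6 -> Prop) :
  P 0 -> P 1 -> P 2 -> P 3 -> P 4 -> P 5 -> forall k, P k.
Proof.
move=> p0 p1 p2 p3 p4 p5 [[|[|[|[|[|[|k]]]]]] hk] //.
- by rewrite (_ : Ordinal hk = 0) //; apply: val_inj.
- by rewrite (_ : Ordinal hk = 1) //; apply: val_inj.
- by rewrite (_ : Ordinal hk = 2) //; apply: val_inj.
- by rewrite (_ : Ordinal hk = 3) //; apply: val_inj.
- by rewrite (_ : Ordinal hk = 4) //; apply: val_inj.
- by rewrite (_ : Ordinal hk = 5) //; apply: val_inj.
Qed.

Section AffineFunctions.
Variables (R : realType) (n : nat).

Inductive affine : ('rV[R]_n -> R) -> Prop :=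
| affine_cst c : affine (fun _ => c)
| affine_coord j : affine (fun x => x 0 j)
| affine_add f g : affine f -> affine g -> affine (fun x => f x + g x)
| affine_scale c f : affine f -> affine (fun x => c * f x).

Lemma affine_ext f g : f =1 g -> affine f -> affine g.
Proof. by move=> /funext ->. Qed.

Lemma affine_opp f : affine f -> affine (fun x => - f x).
Proof.
by move=> af; apply: (@affine_ext (fun x => -1 * f x)); [move=> x; rewrite mulN1r|constructor].
Qed.

Lemma affine_sub f g : affine f -> affine g -> affine (fun x => f x - g x).
Proof. by move=> af ag; constructor => //; apply: affine_opp. Qed.

Lemma affine_scaler c f : affine f -> affine (fun x => f x * c).
Proof.
by move=> af; apply: (@affine_ext (fun x => c * f x)); [move=> x; rewrite mulrC|constructor].
Qed.

Lemma affine_continuous f : affine f -> continuous f.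
Proof.
elim=> {f} [c|j|f g _ cf _ cg|c f _ cf] x.
- exact: cst_continuous.
- exact: coord_continuous.
- exact: (cvgD (cf x) (cg x)).
- exact: (cvgM (cvg_cst c) (cf x)).
Qed.

Lemma affine_derive f (v : 'rV[R]_n) : affine f ->
  (forall x, derivable f x v) /\ exists c, forall x, 'D_v f x = c.
Proof.
elim=> {f} [c|j|f g _ [df [a Da]] _ [dg [b Db]]|c f _ [df [a Da]]].
- by split=> [x|]; [exact: derivable_cst|exists 0 => x; rewrite derive_cst].
- split=> [x|].
    by have /derivable_mxP := @derivable_id _ _ x v; apply.
  exists (v 0 j) => x.
  have Dcoord := congr1 (fun M : 'rV[R]_n => M 0 j)
    (@derive_mx R _ 1 n id x v (@derivable_id _ _ x v)).
  by rewrite /= derive_val mxE in Dcoord.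
- split=> [x|]; first exact: derivableD.
  by exists (a + b) => x; rewrite (deriveD (df x) (dg x)) Da Db.
- split=> [x|]; first exact: derivableZ.
  by exists (c * a) => x; rewrite (deriveZ c (df x)) Da.
Qed.

End AffineFunctions.

Arguments affine {R n}.
Arguments affine_cst {R n}.
Arguments affine_coord {R n}.

Ltac solve_affine := repeat first
  [ apply: affine_coord | apply: affine_add | apply: affine_sub
  | apply: affine_opp | apply: affine_scale | apply: affine_scaler
  | apply: affine_cst ].

Section SmoothAffine.
Variable R : realType.

Lemma affine_Ck k (f : 'rV[R]_6 -> R) : affine f -> Ck k f.
Proof.
elim: k f => [|k IHk] f af /=; first exact: affine_continuous.
split=> [|i]; first exact: affine_continuous.
have [df [c Dc]] := @affine_derive _ _ _ (delta_mx 0 i) af; split=> //.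
by rewrite (funext Dc); apply/IHk/affine_cst.
Qed.

Lemma smooth_map_affine (f : 'rV[R]_6 -> 'rV[R]_6) :
  (forall j, affine (fun x => f x 0 j)) -> smooth_map f.
Proof. by move=> af j k; apply: affine_Ck. Qed.

Lemma affine_Gmk a0 a1 a2 a3 a4 a5 :
  affine a0 -> affine a1 -> affine a2 -> affine a3 -> affine a4 -> affine a5 ->
  forall j, affine (fun x : 'rV[R]_6 => Gmk (a0 x) (a1 x) (a2 x) (a3 x) (a4 x) (a5 x) 0 j).
Proof.
move=> ? ? ? ? ? ?; apply: ord6_cases;
  by apply: affine_ext; first by move=> x; rewrite mxE.
Qed.

End SmoothAffine.

Section HeisenbergMatrices.
Variable K : pzRingType.

Definition heis_mx (u1 u2 u3 : K) : 'M[K]_3 := \matrix_(i < 3, j < 3)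
  nth 0 (nth [::] [:: [:: 1; u2; u3]; [:: 0; 1; u1]; [:: 0; 0; 1]] i) j.

Lemma heis_mxM u1 u2 u3 u1' u2' u3' :
  heis_mx u1' u2' u3' *m heis_mx u1 u2 u3 =
  heis_mx (u1' + u1) (u2' + u2) (u3 + u2' * u1 + u3').
Proof.
apply/matrixP; apply: ord3_cases; apply: ord3_cases.
all: rewrite !mxE !big_ord_recr big_ord0 /= !mxE /=.
all: by rewrite ?mul1r ?mulr1 ?mul0r ?mulr0 ?add0r ?addr0 // addrC.
Qed.

End HeisenbergMatrices.

Arguments heis_mx {K}.

Section ComplexHeisenberg.
Variable R : realType.

Lemma HmatE (w : 'rV[R]_6) :
  Hmat w = heis_mx (Complex (w 0 0) (w 0 1)) (Complex (w 0 2) (w 0 3))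
                   (Complex (w 0 4) (w 0 5)).
Proof. by []. Qed.

Lemma HC_Hmat (w : 'rV[R]_6) : HC (Hmat w).
Proof. by apply: ord3_cases; apply: ord3_cases; split=> //; rewrite mxE. Qed.

Lemma HcoordK : cancel (@Hmat R) Hcoord.
Proof. by move=> w; apply/rowP; apply: ord6_cases; rewrite /Hcoord /Hu1 /Hu2 /Hu3 !mxE. Qed.

Lemma HmatK (M : 'M[R[i]]_3) : HC M -> Hmat (Hcoord M) = M.
Proof.
move=> HM; apply/matrixP; apply: ord3_cases; apply: ord3_cases;
  rewrite /Hcoord /Hu1 /Hu2 /Hu3 !mxE /=;
  match goal with |- context [fun_of_matrix M ?a ?b] =>
    case: (HM a b) => diag lower;
    first [by rewrite diag | by rewrite lower | by case: (M a b)] end.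
Qed.

Lemma Hu1_Hmat (w : 'rV[R]_6) : Hu1 (Hmat w) = Complex (w 0 0) (w 0 1).
Proof. by rewrite /Hu1 mxE. Qed.

Lemma Hu2_Hmat (w : 'rV[R]_6) : Hu2 (Hmat w) = Complex (w 0 2) (w 0 3).
Proof. by rewrite /Hu2 mxE. Qed.

Lemma Hu3_Hmat (w : 'rV[R]_6) : Hu3 (Hmat w) = Complex (w 0 4) (w 0 5).
Proof. by rewrite /Hu3 mxE. Qed.

End ComplexHeisenberg.

Section EisensteinLattice.
Variable R : realType.

Local Notation sqrt3 := (Num.sqrt (3 : R)).

Lemma sqrt3_neq0 : sqrt3 != 0.
Proof. by rewrite sqrtr_eq0 -ltNge ltr0n. Qed.

Lemma sqrt3_mul_sqrt3 : sqrt3 * sqrt3 = 3.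
Proof. by rewrite -expr2 sqr_sqrtr ?ler0n. Qed.

Lemma complex_intr (z : int) : (z%:~R : R[i]) = Complex z%:~R 0.
Proof. by rewrite -[RHS]/(real_complex R z%:~R) rmorph_int. Qed.

(* [Complex (p - q / 2) (q * sqrt3 / 2)] is [p + q * zeta]. *)
Lemma LambdaP (p q : R) :
  Lambda (Complex (p - q / 2) (q * sqrt3 / 2)) <->
  exists a b : int, p = a%:~R /\ q = b%:~R.
Proof.
split=> [[a [b]]|[a [b [-> ->]]]]; last first.
  exists a, b; rewrite /zeta !complex_intr /=.
  by congr Complex; field.
rewrite /zeta !complex_intr /=; case=> Ep Eq.
have Eqb : q = b%:~R.
  have /eqP : (q - b%:~R) * sqrt3 = 0 by rewrite mulrBl; lra.
  by rewrite mulf_eq0 (negbTE sqrt3_neq0) orbF subr_eq0 => /eqP.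
by exists a, b; split => //; rewrite Eqb in Ep; lra.
Qed.

(* [(p_k, q_k)] are the coordinates of [u_k] in the basis [(1, zeta)]. *)
Definition iso_coord (g : 'rV[R]_6) : 'rV[R]_6 :=
  let p1 := - g 0 2 - g 0 3 in let q1 := - g 0 3 in
  let p2 := g 0 0 + g 0 1 in let q2 := g 0 1 in
  let p3 := (g 0 4 + 2 * g 0 5) / 3 in let q3 := (2 * g 0 4 + g 0 5) / 3 in
  Gmk (p1 - q1 / 2) (q1 * sqrt3 / 2) (p2 - q2 / 2) (q2 * sqrt3 / 2)
      (p3 - q3 / 2) (q3 * sqrt3 / 2).

Definition iso_coord_inv (w : 'rV[R]_6) : 'rV[R]_6 :=
  let q1 := 2 * w 0 1 / sqrt3 in let p1 := w 0 0 + w 0 1 / sqrt3 in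
  let q2 := 2 * w 0 3 / sqrt3 in let p2 := w 0 2 + w 0 3 / sqrt3 in
  let q3 := 2 * w 0 5 / sqrt3 in let p3 := w 0 4 + w 0 5 / sqrt3 in
  Gmk (p2 - q2) q2 (- p1 + q1) (- q1) (2 * q3 - p3) (2 * p3 - q3).

Lemma iso_coordK : cancel iso_coord iso_coord_inv.
Proof.
move=> g; have sqrt3_nz := sqrt3_neq0.
by apply/rowP; apply: ord6_cases; rewrite !mxE /=; field.
Qed.

Lemma iso_coord_invK : cancel iso_coord_inv iso_coord.
Proof.
move=> w; have sqrt3_nz := sqrt3_neq0.
by apply/rowP; apply: ord6_cases; rewrite !mxE /=; field.
Qed.

Lemma iso_coord_affine j : affine (fun g => iso_coord g 0 j).
Proof. by apply: affine_Gmk; solve_affine. Qed.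

Lemma iso_coord_inv_affine j : affine (fun w => iso_coord_inv w 0 j).
Proof. by apply: affine_Gmk; solve_affine. Qed.

Lemma Hmat_iso_coordM (g' g : 'rV[R]_6) :
  Hmat (iso_coord (G_mul g' g)) = Hmat (iso_coord g') *m Hmat (iso_coord g).
Proof.
have sqrt3_sqr x y : (x * sqrt3 / 2) * (y * sqrt3 / 2) = x * y * 3 / 4.
  by rewrite -[in RHS]sqrt3_mul_sqrt3; field.
rewrite !HmatE heis_mxM !mxE /=.
by congr heis_mx; congr Complex; rewrite ?sqrt3_sqr; field.
Qed.

Lemma dvd3_coordP (v1 v2 : R) :
  (exists n1 n2 : int, [/\ v1 = n1%:~R, v2 = n2%:~R & (3 %| n1 - n2)%Z]) <->
  exists a b : int, (v1 + 2 * v2) / 3 = a%:~R /\ (2 * v1 + v2) / 3 = b%:~R.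
Proof.
split=> [[n1 [n2 [-> -> /dvdzP[k Ek]]]]|[a [b [Ea Eb]]]].
  have En1 : (n1%:~R : R) = k%:~R * 3 + n2%:~R.
    by rewrite -(subrK n2 n1) Ek intrD intrM.
  by exists (k + n2), (k + k + n2); rewrite !intrD; split; lra.
exists (b + b - a), (a + a - b); split; rewrite ?intrB ?intrD; try lra.
by apply/dvdzP; exists (b - a); ring.
Qed.

Lemma Gamma_iso_coord (g : 'rV[R]_6) :
  Gamma g <-> GammaH (Hmat (iso_coord g)).
Proof.
rewrite /Gamma /GammaH /= Hu1_Hmat Hu2_Hmat Hu3_Hmat !mxE /= !LambdaP.
have [-> ->] : (inord 4 : 'I_6) = 4 /\ (inord 5 : 'I_6) = 5.
  by split; apply/val_inj; rewrite /= inordK.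
split=> [[n [En div3]]|[_ [[a1 [b1 [E1 F1]]] [[a2 [b2 [E2 F2]]]]]]].
- have [|a [b Eab]] := (dvd3_coordP (g 0 4) (g 0 5)).1.
    by exists (n 4), (n 5); rewrite !En.
  split; first exact: HC_Hmat.
  split; [exists (- n 2 - n 3), (- n 3)|split; [exists (n 0 + n 1), (n 1)|by exists a, b]];
    by rewrite !En ?intrD ?intrB ?intrN.
- move=> /dvd3_coordP[n4 [n5 [E4 E5 div3]]].
  exists [ffun k : 'I_6 => [:: a2 - b2; b2; - a1 + b1; - b1; n4; n5]`_k].
  split; last by rewrite !ffunE.
  by apply: ord6_cases; rewrite ffunE /= ?intrD ?intrB ?intrN; lra.
Qed.

End EisensteinLattice.

Arguments iso_coord {R}.
Arguments iso_coord_inv {R}.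

Theorem lemma3p1 (R : realType) :
  exists (f : 'rV[R]_6 -> 'M[R[i]]_3) (finv : 'M[R[i]]_3 -> 'rV[R]_6),
    (forall g, HC (f g)) /\
    (forall g' g, f (G_mul g' g) = f g' *m f g) /\
    (forall g, finv (f g) = g) /\
    (forall M, HC M -> f (finv M) = M) /\
    smooth_map (fun g => Hcoord (f g)) /\
    smooth_map (fun w => finv (Hmat w)) /\
    (forall g, Gamma g <-> GammaH (f g)).
Proof.
exists (fun g => Hmat (iso_coord g)), (fun M => iso_coord_inv (Hcoord M)).
split; first by move=> g; apply: HC_Hmat.
split; first exact: Hmat_iso_coordM.
split; first by move=> g; rewrite HcoordK iso_coordK.
split; first by move=> M HM; rewrite iso_coord_invK HmatK.
split.
  by apply: smooth_map_affine => j; under eq_fun do rewrite HcoordK; apply: iso_coord_affine.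
split.
  by apply: smooth_map_affine => j; under eq_fun do rewrite HcoordK; apply: iso_coord_inv_affine.
exact: Gamma_iso_coord.
Qed.
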